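(* The finitely generated objects of the category $\mathsf{Alex}$ of Alexandroff-discrete spaces are precisely the finite topological spaces. The finitely generated objects of the category $\mathsf{Alex}_0$ of Alexandroff-discrete T$_0$-spaces are precisely the finite T$_0$-spaces.
   Context: A topological space is Alexandroff-discrete if arbitrary intersections of open sets are open. $\mathsf{Alex}$ and $\mathsf{Alex}_0$ are the full subcategories of $\mathsf{Top}$ of Alexandroff-discrete spaces and of Alexandroff-discrete T$_0$-spaces, respectively. An object $X$ of a category $\mathcal{C}$ is finitely generated if for every directed diagram $(Z_i)_{i\in I}$ in $\mathcal{C}$ (indexed by a directed poset, i.e. every finite subset has an upper bound) all of whose connecting morphisms $z_{i,j}$ are monomorphisms, with colimit cocone $c_i:Z_i\to Z$ in $\mathcal{C}$, every morphism $f:X\to Z$ factorizes as $f=c_i\cdot g$ for some $i$ and $g:X\to Z_i$, and if also $f=c_i\cdot g'$ then $z_{i,j}\cdot g=z_{i,j}\cdot g'$ for some connecting morphism $z_{i,j}$. *)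

From HB Require Import structures.
From mathcomp Require Import all_boot all_order.
From mathcomp Require Import all_classical all_reals topology.

Local Open Scope classical_set_scope.

Definition alexandroff (T : topologicalType) : Prop :=
  forall F : set (set T), (forall U, F U -> open U) ->
    open (\bigcap_(U in F) U).

Definition Alex (T : topologicalType) : Prop := alexandroff T.
Definition Alex0 (T : topologicalType) : Prop :=
  alexandroff T /\ kolmogorov_space T.

(* A subcategory C of Top given by a class of objects; morphisms are
   continuous maps, identified with their underlying functions. *)

Definition mono_in (C : topologicalType -> Prop) {X Y : topologicalType}
  (f : X -> Y) : Prop :=
  forall W : topologicalType, C W -> forall g h : W -> X,
    continuous g -> continuous h -> f \o g = f \o h -> g = h.

Definition directed_poset {I : Type} (le : I -> I -> Prop) : Prop :=
  [/\ (forall i, le i i),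
      (forall i j, le i j -> le j i -> i = j),
      (forall i j k, le i j -> le j k -> le i k) &
      (forall A : set I, finite_set A -> exists u, forall i, A i -> le i u)].

Definition diagram_in (C : topologicalType -> Prop) {I : Type}
  (le : I -> I -> Prop) (Z : I -> topologicalType)
  (z : forall i j, le i j -> Z i -> Z j) : Prop :=
  [/\ (forall i, C (Z i)),
      (forall i j (p : le i j), continuous (z i j p)),
      (forall i (p : le i i), z i i p = id) &
      (forall i j k (p : le i j) (q : le j k) (r : le i k),
          z j k q \o z i j p = z i k r)].

Definition colimit_in (C : topologicalType -> Prop) {I : Type}
  (le : I -> I -> Prop) (Z : I -> topologicalType)
  (z : forall i j, le i j -> Z i -> Z j)
  (L : topologicalType) (c : forall i, Z i -> L) : Prop :=
  [/\ C L,
      (forall i, continuous (c i)),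
      (forall i j (p : le i j), c j \o z i j p = c i) &
      (forall W : topologicalType, C W -> forall d : forall i, Z i -> W,
          (forall i, continuous (d i)) ->
          (forall i j (p : le i j), d j \o z i j p = d i) ->
          exists! u : L -> W, continuous u /\ forall i, u \o c i = d i)].

Definition fin_gen (C : topologicalType -> Prop) (X : topologicalType) : Prop :=
  forall (I : Type) (le : I -> I -> Prop) (Z : I -> topologicalType)
         (z : forall i j, le i j -> Z i -> Z j),
    directed_poset le -> diagram_in C le Z z ->
    (forall i j (p : le i j), mono_in C (z i j p)) ->
    forall (L : topologicalType) (c : forall i, Z i -> L),
      colimit_in C le Z z L c ->
      forall f : X -> L, continuous f ->
        (exists i, exists g : X -> Z i, continuous g /\ f = c i \o g) /\
        (forall i (g g' : X -> Z i), continuous g -> continuous g' ->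
            f = c i \o g -> f = c i \o g' ->
            exists j, exists p : le i j, z i j p \o g = z i j p \o g').

From HB Require Import structures.
From mathcomp Require Import all_boot all_order.
From mathcomp Require Import all_classical all_reals topology.
Local Open Scope classical_set_scope.

(* In an Alexandroff space the open sets are exactly the up-sets of the
   specialization preorder, so continuous maps out of it are the monotone maps,
   and every preorder is an object of Alex (of Alex_0 if it is a partial order).

   Every X in Alex (resp. Alex_0) is the colimit of its finite subspaces along
   the inclusions, a directed diagram of monomorphisms; if X is finitely
   generated the identity of X factors through one of them, so X is finite.

   Conversely, the colimit of a directed diagram (Z_i) is the space of germs:
   points of the Z_i up to eventual equality, preordered by eventual
   specialization. So every point of a colimit comes from some Z_i, and an
   equality or specialization between such points already holds at some stage.
   For finite X, the finitely many points and specializations involved in a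
   continuous map into the colimit, or in two factorizations of it, are all
   witnessed at one common stage. *)

Lemma proj1_sig_inj (T : Type) (P : T -> Prop) (a b : {x | P x}) :
  proj1_sig a = proj1_sig b -> a = b.
Proof. exact: eq_sig_hprop (fun x => @Prop_irrelevance (P x)) a b. Qed.

Definition spec_le {T : topologicalType} (x y : T) : Prop :=
  forall U, open U -> U x -> U y.

Lemma spec_le_refl {T : topologicalType} (x : T) : spec_le x x.
Proof. by []. Qed.

Lemma spec_le_trans (T : topologicalType) (x y w : T) :
  spec_le x y -> spec_le y w -> spec_le x w.
Proof. by move=> xy yw U oU Ux; apply: yw oU (xy U oU Ux). Qed.

Lemma continuous_spec_le {S T : topologicalType} {f : S -> T} {x y : S} :
  continuous f -> spec_le x y -> spec_le (f x) (f y).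
Proof. by move=> /continuousP fcont xy U oU; apply: xy (fcont U oU). Qed.

Lemma kolmogorovP (T : topologicalType) :
  kolmogorov_space T <-> forall x y : T, spec_le x y -> spec_le y x -> x = y.
Proof.
have separates (x y : T) : ~ spec_le x y ->
    exists A : set T, A \in nbhs x /\ y \in ~` A.
  move=> /existsNP [U /not_implyP [oU /not_implyP [Ux nUy]]].
  by exists U; rewrite !inE; split => //; apply: open_nbhs_nbhs.
split => [T0 x y xy yx|antisym x y /eqP neq].
  apply: contrapT => /eqP /T0 [A [] [/[!inE]]];
    rewrite nbhsE => -[B [oB Bu] BA] nA; apply/nA/BA; [exact: xy|exact: yx].
have [xy|nxy] := pselect (spec_le x y).
  have [|A ?] := separates y x; first by move=> /(antisym _ _ xy).
  by exists A; right.
by have [A ?] := separates x y nxy; exists A; left.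
Qed.

Lemma alexandroff_openE (T : topologicalType) (U : set T) : alexandroff T ->
  open U <-> forall x y, spec_le x y -> U x -> U y.
Proof.
move=> alexT; split => [oU x y xy|upU]; first exact: xy.
have -> : U = \bigcup_(x in U) \bigcap_(V in [set V | open V /\ V x]) V.
  apply/seteqP; split => [x Ux|y [x Ux xy]]; first by exists x => // V [].
  by apply: (upU x y) Ux => V oV Vx; apply: xy.
by apply: bigcup_open => x _; apply: alexT => V [].
Qed.

Lemma alexandroff_continuous (S T : topologicalType) (f : S -> T) :
  alexandroff S -> (forall x y, spec_le x y -> spec_le (f x) (f y)) ->
  continuous f.
Proof.
move=> alexS fmono; apply/continuousP => U oU.
by apply/alexandroff_openE => // x y /fmono /(_ U oU).
Qed.


Definition upset_space {T : Type} (R : T -> T -> Prop) : Type := T.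

Section UpsetSpace.
Context {T : Type} {R : T -> T -> Prop}.
Local Notation X := (upset_space R).

HB.instance Definition _ := gen_eqMixin X.
HB.instance Definition _ := gen_choiceMixin X.

Definition upset (A : set T) := forall x y, R x y -> A x -> A y.

Lemma upsetT : upset setT. Proof. by []. Qed.

Lemma upsetI : setI_closed upset.
Proof. by move=> A B upA upB x y xy [Ax Bx]; split; [apply: upA Ax|apply: upB Bx]. Qed.

Lemma upsetU (I : Type) (F : I -> set T) :
  (forall i, upset (F i)) -> upset (\bigcup_i F i).
Proof. by move=> upF x y xy [i _ Fix]; exists i => //; apply: upF Fix. Qed.

HB.instance Definition _ := isOpenTopological.Build X upsetT upsetI upsetU.

Lemma upset_openE (A : set X) : open A <-> upset A.
Proof. by []. Qed.

Lemma upset_alexandroff : alexandroff X.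
Proof.
move=> F oF; apply/upset_openE => x y xy Fx U FU.
exact: (upset_openE _).1 (oF U FU) x y xy (Fx U FU).
Qed.

Lemma upset_spec_le (x y : X) : R x y -> spec_le x y.
Proof. by move=> xy U /upset_openE; apply. Qed.

Hypothesis R_refl : forall x, R x x.
Hypothesis R_trans : forall x y z, R x y -> R y z -> R x z.

Lemma spec_le_upset (x y : X) : spec_le x y -> R x y.
Proof.
apply; last exact: R_refl.
by apply/upset_openE => u v uv xu; apply: R_trans xu uv.
Qed.

Lemma upset_kolmogorov :
  (forall x y, R x y -> R y x -> x = y) -> kolmogorov_space X.
Proof.
move=> antisym; apply/kolmogorovP => x y /spec_le_upset xy /spec_le_upset yx.
exact: antisym.
Qed.

End UpsetSpace.


Definition alex_class (t0 : bool) (X : topologicalType) : Prop :=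
  alexandroff X /\ (t0 -> kolmogorov_space X).

Lemma Alex_class : Alex = alex_class false.
Proof. by apply/funext => X; apply/propext; split => [|[]]. Qed.

Lemma Alex0_class : Alex0 = alex_class true.
Proof.
by apply/funext => X; apply/propext; split => [[? ?]|[? /(_ isT)]]; split.
Qed.

Lemma alex_class_upset (t0 : bool) (T : Type) (R : T -> T -> Prop) :
  (forall x, R x x) -> (forall x y z, R x y -> R y z -> R x z) ->
  (t0 -> forall x y, R x y -> R y x -> x = y) -> alex_class t0 (upset_space R).
Proof.
move=> R_refl R_trans antisym; split; first exact: upset_alexandroff.
by move=> /antisym; apply: upset_kolmogorov.
Qed.

Lemma alex_class_spec_le_antisym {t0 : bool} {X : topologicalType} :
  t0 -> alex_class t0 X -> forall x y : X, spec_le x y -> spec_le y x -> x = y.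
Proof. by move=> t [_ /(_ t) /kolmogorovP]. Qed.

Lemma inj_mono_in (C : topologicalType -> Prop) (X Y : topologicalType)
  (f : X -> Y) : injective f -> mono_in C f.
Proof.
move=> finj W _ g h _ _ fgh; apply/funext => w; apply: finj.
exact: (congr1 (@^~ w) fgh).
Qed.

Section EquivalenceClasses.
Context {S : Type} {E P : S -> S -> Prop}.
Hypothesis E_refl : forall x, E x x.
Hypothesis E_sym : forall x y, E x y -> E y x.
Hypothesis E_trans : forall x y w, E x y -> E y w -> E x w.
Hypothesis P_refl : forall x, P x x.
Hypothesis P_trans : forall x y w, P x y -> P y w -> P x w.
Hypothesis E_P : forall x y, E x y -> P x y.

Definition quot := {A : set S | exists x, A = E x}.

Definition cls (x : S) : quot := exist _ (E x) (ex_intro _ x erefl).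

Lemma clsP (A : quot) : exists x, A = cls x.
Proof. by case: A => A [x Ax]; exists x; apply: proj1_sig_inj. Qed.

Lemma cls_eqE (x y : S) : cls x = cls y <-> E x y.
Proof.
split => [/(congr1 (@proj1_sig _ _)) /= ->|Exy]; first exact: E_refl.
apply/proj1_sig_inj/seteqP; split => w /= Ew.
  exact: E_trans (E_sym _ _ Exy) Ew.
exact: E_trans Exy Ew.
Qed.

Definition quot_rel (A B : quot) := exists x y, [/\ A = cls x, B = cls y & P x y].

Lemma quot_relE (x y : S) : quot_rel (cls x) (cls y) <-> P x y.
Proof.
split => [[x' [y' [/cls_eqE xx' /cls_eqE yy' Pxy']]]|Pxy]; last by exists x, y.
apply: P_trans (E_P _ _ xx') (P_trans _ _ _ Pxy' _).
exact/E_P/E_sym.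
Qed.

Lemma quot_rel_refl (A : quot) : quot_rel A A.
Proof. by have [x ->] := clsP A; apply/quot_relE/P_refl. Qed.

Lemma quot_rel_trans (A B C : quot) : quot_rel A B -> quot_rel B C -> quot_rel A C.
Proof.
have [x ->] := clsP A; have [y ->] := clsP B; have [w ->] := clsP C.
by rewrite !quot_relE; apply: P_trans.
Qed.

Lemma quot_rel_antisym : (forall x y, P x y -> P y x -> E x y) ->
  forall A B : quot, quot_rel A B -> quot_rel B A -> A = B.
Proof.
move=> P_antisym A B; have [x ->] := clsP A; have [y ->] := clsP B.
by rewrite !quot_relE cls_eqE; apply: P_antisym.
Qed.

End EquivalenceClasses.

Arguments quot_rel {S} E P.

Definition finsub (X : Type) := {A : set X | finite_set A}.

Definition finsub_le {X : Type} (A B : finsub X) := proj1_sig A `<=` proj1_sig B.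

Definition finsub1 {X : Type} (x : X) : finsub X := exist _ [set x] (finite_set1 x).

Lemma finsub_directed (X : Type) : directed_poset (@finsub_le X).
Proof.
split => [A|A B AB BA|A B D|F finF]; first by [].
- by apply/proj1_sig_inj/seteqP.
- exact: subset_trans.
have finU : finite_set (\bigcup_(A in F) proj1_sig A).
  by apply: bigcup_finite => // A _; exact: proj2_sig.
by exists (exist _ _ finU) => A FA x Ax; exists A.
Qed.

Section FinitePieces.
Variables (t0 : bool) (X : topologicalType).
Hypothesis X_class : alex_class t0 X.

Definition piece_rel (A : finsub X) (a b : {x | proj1_sig A x}) :=
  spec_le (proj1_sig a) (proj1_sig b).

Definition piece (A : finsub X) : topologicalType := upset_space (piece_rel A).

Definition piece_val {A : finsub X} (a : piece A) : X := proj1_sig a.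

Definition piece_incl {A B : finsub X} (AB : finsub_le A B) (a : piece A) : piece B :=
  exist _ (piece_val a) (AB _ (proj2_sig a)).

Lemma spec_le_piece (A : finsub X) (a b : piece A) :
  spec_le a b <-> spec_le (piece_val a) (piece_val b).
Proof.
split; last exact: (upset_spec_le (R := piece_rel A)).
apply: (spec_le_upset (R := piece_rel A)) => [u|u v w]; first exact: spec_le_refl.
exact: spec_le_trans.
Qed.

Lemma piece_class (A : finsub X) : alex_class t0 (piece A).
Proof.
apply: alex_class_upset => [a|a b c|t a b ab ba].
- exact: spec_le_refl.
- exact: spec_le_trans.
- by apply: proj1_sig_inj; apply: (alex_class_spec_le_antisym t X_class).
Qed.

Lemma piece_val_continuous (A : finsub X) : continuous (@piece_val A).
Proof.
apply: alexandroff_continuous => [|a b /spec_le_piece //]; exact: upset_alexandroff.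
Qed.

Lemma pieces_diagram : diagram_in (alex_class t0) finsub_le piece (@piece_incl).
Proof.
split => [A|A B AB|A AA|A B D AB BD AD]; first exact: piece_class.
- apply: alexandroff_continuous => [|a b /spec_le_piece ab]; last exact/spec_le_piece.
  exact: upset_alexandroff.
- by apply/funext => a; apply: proj1_sig_inj.
- by apply/funext => a; apply: proj1_sig_inj.
Qed.

Lemma piece_incl_mono (A B : finsub X) (AB : finsub_le A B) :
  mono_in (alex_class t0) (piece_incl AB).
Proof. by apply: inj_mono_in => a b /(congr1 piece_val) /= ab; apply: proj1_sig_inj. Qed.

Lemma pieces_colimit :
  colimit_in (alex_class t0) finsub_le piece (@piece_incl) X (@piece_val).
Proof.
split => // [|W W_class d dcont dcomp]; first exact: piece_val_continuous.
pose pt (x : X) : piece (finsub1 x) := exist _ x erefl.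
have dE (A : finsub X) (a : piece A) : d A a = d _ (pt (piece_val a)).
  have sA : finsub_le (finsub1 (piece_val a)) A by move=> y ->; exact: proj2_sig.
  by rewrite -(dcomp _ _ sA); congr (d A); apply: proj1_sig_inj.
exists (fun x => d _ (pt x)); split; first split.
- apply: alexandroff_continuous X_class.1 _ => x y xy.
  pose P : finsub X := exist _ [set x; y] (finite_set2 x y).
  rewrite -(dE P (exist _ x (or_introl erefl))) -(dE P (exist _ y (or_intror erefl))).
  by apply: continuous_spec_le (dcont P) _; apply/spec_le_piece.
- by move=> A; apply/funext => a; rewrite [RHS]dE.
- by move=> u [_ ud]; apply/funext => x; rewrite -(ud (finsub1 x)).
Qed.

Lemma fin_gen_finite : fin_gen (alex_class t0) X -> finite_set [set: X].
Proof.
move=> X_fg.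
have [[A [g [_ gE]]] _] := X_fg _ _ _ _ (finsub_directed X) pieces_diagram
  piece_incl_mono _ _ pieces_colimit id (fun x => cvg_id).
apply: sub_finite_set (proj2_sig A) => x _.
by rewrite (congr1 (@^~ x) gE); exact: proj2_sig.
Qed.

End FinitePieces.

Section Germs.
Variables (t0 : bool) (I : Type) (le : I -> I -> Prop) (Z : I -> topologicalType)
  (z : forall i j, le i j -> Z i -> Z j).
Arguments z {i j}.
Hypothesis le_directed : directed_poset le.
Hypothesis Z_diagram : diagram_in (alex_class t0) le Z (@z).

Let le_refl i : le i i.
Proof. by case: le_directed. Qed.

Let le_trans {i j k} : le i j -> le j k -> le i k.
Proof. by case: le_directed => _ _ + _; apply. Qed.

Let le_ub {A : set I} : finite_set A -> exists m, forall i, A i -> le i m.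
Proof. by case: le_directed => _ _ _; apply. Qed.

Let le_ub2 i j : exists m, le i m /\ le j m.
Proof.
by have [m ijm] := le_ub (finite_set2 i j); exists m; split; apply: ijm; [left|right].
Qed.

Let Z_class i : alex_class t0 (Z i).
Proof. by case: Z_diagram. Qed.

Let z_continuous i j (p : le i j) : continuous (z p).
Proof. by case: Z_diagram. Qed.

Let z_id {i} (p : le i i) a : z p a = a.
Proof. by case: Z_diagram => _ _ /(_ i p) ->. Qed.

Let z_comp {i j k} (p : le i j) (q : le j k) (r : le i k) a : z q (z p a) = z r a.
Proof. by case: Z_diagram => _ _ _ /(_ _ _ _ p q r) /(congr1 (@^~ a)). Qed.

Local Notation S := {i : I & Z i}.

Definition z_stable (R : forall k, Z k -> Z k -> Prop) :=
  forall i j (p : le i j) a b, R i a b -> R j (z p a) (z p b).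

Definition germ_rel (R : forall k, Z k -> Z k -> Prop) (x y : S) :=
  exists k (p : le (tag x) k) (q : le (tag y) k), R k (z p (tagged x)) (z q (tagged y)).

Definition germ_from (R : forall k, Z k -> Z k -> Prop) (m : I) (x y : S) :=
  [/\ le (tag x) m, le (tag y) m &
      forall k (p : le (tag x) k) (q : le (tag y) k),
        le m k -> R k (z p (tagged x)) (z q (tagged y))].

Implicit Type R : forall k, Z k -> Z k -> Prop.

Lemma germ_rel_from {R} {x y : S} :
  z_stable R -> germ_rel R x y -> exists m, germ_from R m x y.
Proof.
move=> R_stable [m [p [q xy]]]; exists m; split => // k p' q' mk.
by rewrite -(z_comp p mk p') -(z_comp q mk q'); apply: R_stable.
Qed.

Lemma germ_from_le {R} {m m' : I} {x y : S} :
  le m m' -> germ_from R m x y -> germ_from R m' x y.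
Proof.
move=> mm' [xm ym xy]; split; [exact: le_trans xm mm'|exact: le_trans ym mm'|].
by move=> k p q m'k; apply: xy (le_trans mm' m'k).
Qed.

Lemma germ_rel_refl {R} (x : S) : (forall k a, R k a a) -> germ_rel R x x.
Proof. by move=> R_refl; exists (tag x), (le_refl _), (le_refl _). Qed.

Lemma germ_rel_trans {R} {x y w : S} : z_stable R ->
  (forall k (a b c : Z k), R k a b -> R k b c -> R k a c) ->
  germ_rel R x y -> germ_rel R y w -> germ_rel R x w.
Proof.
move=> R_stable R_trans /(germ_rel_from R_stable) [m1 xy] /(germ_rel_from R_stable) [m2 yw].
have [m [m1m m2m]] := le_ub2 m1 m2.
have [xm ym xyR] := germ_from_le m1m xy; have [_ wm ywR] := germ_from_le m2m yw.
exists m, xm, wm.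
exact: R_trans _ _ _ _ (xyR m xm ym (le_refl m)) (ywR m ym wm (le_refl m)).
Qed.

Lemma germ_rel_uniform {R} {A : Type} {D : set A} {x y : A -> S} :
  z_stable R -> finite_set D -> (forall a, D a -> germ_rel R (x a) (y a)) ->
  exists m, forall a, D a -> germ_from R m (x a) (y a).
Proof.
(* a junk index [i0] for the [a] outside [D]: an upper bound of [set0] *)
move=> R_stable finD xy; have [i0 _] := le_ub (finite_set0 I).
have /choice [k kP] : forall a, exists k, D a -> germ_from R k (x a) (y a).
  move=> a; have [/xy /(germ_rel_from R_stable) [m ?]|nDa] := pselect (D a).
    by exists m.
  by exists i0 => /nDa.
have [m km] := le_ub (finite_image k finD).
by exists m => a Da; apply: germ_from_le (kP a Da); apply: km; exists a.
Qed.

Definition germ_eq := germ_rel (fun k => @eq (Z k)).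
Definition germ_le := germ_rel (fun k => @spec_le (Z k)).

Lemma eq_stable : z_stable (fun k => @eq (Z k)).
Proof. by move=> i j p a b ->. Qed.

Lemma spec_le_stable : z_stable (fun k => @spec_le (Z k)).
Proof. by move=> i j p a b; apply: continuous_spec_le. Qed.

Lemma germ_eq_refl (x : S) : germ_eq x x.
Proof. exact: germ_rel_refl. Qed.

Lemma germ_eq_sym (x y : S) : germ_eq x y -> germ_eq y x.
Proof. by case=> k [p [q xy]]; exists k, q, p. Qed.

Lemma germ_eq_trans (x y w : S) : germ_eq x y -> germ_eq y w -> germ_eq x w.
Proof. by apply: germ_rel_trans eq_stable _ => k a b c ->. Qed.

Lemma germ_le_refl (x : S) : germ_le x x.
Proof. by apply: germ_rel_refl => k; apply: spec_le_refl. Qed.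

Lemma germ_le_trans (x y w : S) : germ_le x y -> germ_le y w -> germ_le x w.
Proof. by apply: germ_rel_trans spec_le_stable _ => k; apply: spec_le_trans. Qed.

Lemma germ_eq_le (x y : S) : germ_eq x y -> germ_le x y.
Proof. by case=> k [p [q xy]]; exists k, p, q; rewrite xy; apply: spec_le_refl. Qed.

Lemma germ_le_antisym : t0 -> forall x y : S, germ_le x y -> germ_le y x -> germ_eq x y.
Proof.
move=> t x y /(germ_rel_from spec_le_stable) [m1 xy] /(germ_rel_from spec_le_stable) [m2 yx].
have [m [m1m m2m]] := le_ub2 m1 m2.
have [xm ym xyR] := germ_from_le m1m xy; have [_ _ yxR] := germ_from_le m2m yx.
exists m, xm, ym; apply: (alex_class_spec_le_antisym t (Z_class m)).
  exact: xyR (le_refl m).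
exact: yxR (le_refl m).
Qed.

Definition germ_space : topologicalType := upset_space (quot_rel germ_eq germ_le).

Definition germ_cls (x : S) : germ_space := cls x.

Definition germ_of {i} (a : Z i) : germ_space := germ_cls (Tagged Z a).

Let germ_cls_eqE (x y : S) : germ_cls x = germ_cls y <-> germ_eq x y.
Proof. exact: cls_eqE germ_eq_refl germ_eq_sym germ_eq_trans x y. Qed.

Let germ_quot_relE (x y : S) :
  quot_rel germ_eq germ_le (germ_cls x) (germ_cls y) <-> germ_le x y.
Proof.
exact: quot_relE germ_eq_refl germ_eq_sym germ_eq_trans germ_le_trans germ_eq_le x y.
Qed.

Let germ_quot_refl :=
  quot_rel_refl germ_eq_refl germ_eq_sym germ_eq_trans germ_le_refl germ_le_trans
    germ_eq_le.

Let germ_quot_trans :=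
  quot_rel_trans germ_eq_refl germ_eq_sym germ_eq_trans germ_le_trans germ_eq_le.

Lemma germ_space_class : alex_class t0 germ_space.
Proof.
apply: alex_class_upset germ_quot_refl germ_quot_trans _ => t.
exact: quot_rel_antisym germ_eq_refl germ_eq_sym germ_eq_trans germ_le_trans germ_eq_le
  (germ_le_antisym t).
Qed.

Lemma germ_cls_spec_le (x y : S) : spec_le (germ_cls x) (germ_cls y) <-> germ_le x y.
Proof.
rewrite -germ_quot_relE; split; last exact: upset_spec_le.
exact: (spec_le_upset (R := quot_rel germ_eq germ_le) germ_quot_refl germ_quot_trans).
Qed.

Lemma germ_of_continuous i : continuous (@germ_of i).
Proof.
apply: alexandroff_continuous (Z_class i).1 _ => a b ab.
by apply/germ_cls_spec_le; exists i, (le_refl i), (le_refl i); rewrite !z_id.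
Qed.

Lemma germ_of_z i j (p : le i j) : germ_of \o z p = @germ_of i.
Proof.
by apply/funext => a; apply/germ_cls_eqE; exists j, (le_refl j), p; rewrite /= z_id.
Qed.

Variables (L : topologicalType) (c : forall i, Z i -> L).
Hypothesis L_colimit : colimit_in (alex_class t0) le Z (@z) L c.

Local Notation c_at x := (c (tag x) (tagged x)).

Let c_continuous i : continuous (c i).
Proof. by case: L_colimit. Qed.

Let c_z {i j} (p : le i j) a : c j (z p a) = c i a.
Proof. by case: L_colimit => _ _ /(_ i j p) /(congr1 (@^~ a)). Qed.

Lemma c_germ_eq (x y : S) : germ_eq x y -> c_at x = c_at y.
Proof. by case=> k [p [q xy]]; rewrite -(c_z p) -(c_z q) xy. Qed.

Lemma c_germ_le (x y : S) : germ_le x y -> spec_le (c_at x) (c_at y).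
Proof.
case=> k [p [q xy]]; rewrite -(c_z p) -(c_z q).
exact: continuous_spec_le (c_continuous k) xy.
Qed.

Lemma colimit_to_germs : exists u : L -> germ_space,
  continuous u /\ forall x : S, u (c_at x) = germ_cls x.
Proof.
case: L_colimit => _ _ _ /(_ _ germ_space_class (@germ_of) germ_of_continuous germ_of_z).
by case=> u [[ucont uc] _]; exists u; split => // -[i a]; apply: (congr1 (@^~ a) (uc i)).
Qed.

Lemma colimit_germ_eq (x y : S) : c_at x = c_at y -> germ_eq x y.
Proof.
by have [u [_ uc]] := colimit_to_germs; move=> /(congr1 u); rewrite !uc => /germ_cls_eqE.
Qed.

Lemma colimit_germ_le (x y : S) : spec_le (c_at x) (c_at y) -> germ_le x y.
Proof.
have [u [ucont uc]] := colimit_to_germs.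
by move=> /(continuous_spec_le ucont); rewrite !uc => /germ_cls_spec_le.
Qed.

Definition germ_eval (A : germ_space) : L := c_at (proj1_sig (cid (clsP A))).

Lemma germ_eval_cls (x : S) : germ_eval (germ_cls x) = c_at x.
Proof.
apply/esym/c_germ_eq/germ_cls_eqE; exact: proj2_sig (cid (clsP (germ_cls x))).
Qed.

Lemma germ_eval_continuous : continuous germ_eval.
Proof.
apply: alexandroff_continuous => [|A B]; first exact: upset_alexandroff.
have [x ->] := clsP A; have [y ->] := clsP B.
by rewrite !germ_eval_cls => /germ_cls_spec_le /c_germ_le.
Qed.

Lemma colimit_cover (l : L) : exists x : S, l = c_at x.
Proof.
have [u [ucont uc]] := colimit_to_germs.
have [L_class _ c_z' L_univ] := L_colimit.
have [w [_ w_uniq]] := L_univ L L_class c c_continuous c_z'.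
have idP : continuous (@id L) /\ forall i, id \o c i = c i.
  by split => // l'; apply: cvg_id.
have evalP : continuous (germ_eval \o u) /\ forall i, germ_eval \o u \o c i = c i.
  split => [l'|i]; first exact: continuous_comp (ucont l') (germ_eval_continuous _).
  by apply/funext => a /=; rewrite (uc (Tagged Z a)) germ_eval_cls.
(* both [germ_eval \o u] and [id] factor the cocone [c] through itself *)
have := congr1 (@^~ l) (etrans (esym (w_uniq _ evalP)) (w_uniq _ idP)) => /= <-.
by exists (proj1_sig (cid (clsP (u l)))).
Qed.

Lemma colimit_factor (X : topologicalType) (f : X -> L) :
  alexandroff X -> finite_set [set: X] -> continuous f ->
  exists i (g : X -> Z i), continuous g /\ f = c i \o g.
Proof.
move=> alexX finX fcont.
have /choice [r rP] : forall x, exists s : S, f x = c_at s.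
  by move=> x; apply: colimit_cover.
have finD : finite_set [set xy : X * X | spec_le xy.1 xy.2].
  by apply: sub_finite_set (finite_setX finX finX) => xy.
have r_le (xy : X * X) : spec_le xy.1 xy.2 -> germ_le (r xy.1) (r xy.2).
  by move=> /(continuous_spec_le fcont); rewrite !rP => /colimit_germ_le.
have [m rm] := germ_rel_uniform spec_le_stable finD r_le.
have rm' x : le (tag (r x)) m by case: (rm (x, x) (spec_le_refl x)).
exists m, (fun x => z (rm' x) (tagged (r x))); split.
  apply: alexandroff_continuous alexX _ => x y xy.
  by case: (rm (x, y) xy) => _ _; apply; apply: le_refl.
by apply/funext => x /=; rewrite c_z rP.
Qed.

Lemma colimit_factor_unique (X : Type) (i : I) (g g' : X -> Z i) :
  finite_set [set: X] -> c i \o g = c i \o g' ->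
  exists j (p : le i j), z p \o g = z p \o g'.
Proof.
move=> finX gg'.
have g_eq x : [set: X] x -> germ_eq (Tagged Z (g x)) (Tagged Z (g' x)).
  by move=> _; apply: colimit_germ_eq; exact: (congr1 (@^~ x) gg').
have [m gm] := germ_rel_uniform eq_stable finX g_eq.
have [j [ij mj]] := le_ub2 i m.
exists j, ij; apply/funext => x.
by have [_ _ /(_ j ij ij mj)] := gm x Logic.I.
Qed.

End Germs.

Arguments colimit_factor {t0 I le Z z} le_directed Z_diagram {L c} L_colimit {X f}.
Arguments colimit_factor_unique {t0 I le Z z} le_directed Z_diagram {L c} L_colimit
  {X i g g'}.

Lemma finite_fin_gen (t0 : bool) (X : topologicalType) :
  alex_class t0 X -> finite_set [set: X] -> fin_gen (alex_class t0) X.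
Proof.
(* The connecting maps need not be monomorphisms for this direction. *)
move=> X_class finX I le Z z le_dir Z_diag _ L c L_colim f fcont; split.
  exact: (colimit_factor le_dir Z_diag L_colim X_class.1 finX fcont).
by move=> i g g' _ _ -> fg; apply: (colimit_factor_unique le_dir Z_diag L_colim finX fg).
Qed.

Lemma fin_gen_alex_classE (t0 : bool) (X : topologicalType) :
  alex_class t0 X -> fin_gen (alex_class t0) X <-> finite_set [set: X].
Proof. by move=> X_class; split; [exact: fin_gen_finite|exact: finite_fin_gen]. Qed.

Theorem proposition8p5 :
  (forall X : topologicalType, Alex X ->
     (fin_gen Alex X <-> finite_set [set: X])) /\
  (forall X : topologicalType, Alex0 X ->
     (fin_gen Alex0 X <-> finite_set [set: X])).
Proof. by rewrite Alex_class Alex0_class; split => X /fin_gen_alex_classE. Qed.
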